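(* Let $0\le\alpha\le\beta$ and let $q=(q_n)$, $q_n\in(0,1)$, satisfy $st-\lim_n q_n=1$, $st-\lim_n q_n^n=a$ $(a<1)$ and $st-\lim_n 1/[n]_{q_n}=0$. Then for every non-decreasing bounded continuous function $f$ on $[0,\infty)$, every $x\ge 0$ and every $n\in\mathbb N$, $$\big|\mathfrak{D}_n^{(\alpha,\beta)}(f;q_n;x)-f(x)\big|\le 2\,\omega\big(f;\sqrt{\delta_n(x)}\big),$$ where, writing $q=q_n$, $$\delta_n(x)=\left(\frac{[n]_q(q[n]_q+1)}{q([n]_q+\beta)^2}+1-\frac{2[n]_q}{[n]_q+\beta}\right)x^2+\left(\frac{[n]_q+q^2[n]_q-2\alpha\beta-2q\beta}{([n]_q+\beta)^2}\right)x+\frac{q^2(1+q)+2q\alpha+\alpha^2}{([n]_q+\beta)^2}.$$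
   Context: $q$-calculus notation, for $0<q<1$: $[n]_q=\frac{1-q^n}{1-q}$; $[k]_q!=[k]_q[k-1]_q\cdots[1]_q$ with $[0]_q!=1$; $\left[\begin{array}{c}n\\k\end{array}\right]_q=\frac{[n]_q!}{[k]_q!\,[n-k]_q!}$; $(1+x)_q^m=(1+x)(1+qx)\cdots(1+q^{m-1}x)$ with $(1+x)_q^0=1$. The $q$-exponential is $E_q(z)=\sum_{k=0}^\infty q^{k(k-1)/2}\frac{z^k}{[k]_q!}=\prod_{j=0}^\infty(1+(1-q)q^jz)$. The $q$-Jackson integral is $\int_0^a g(t)\,d_qt=(1-q)a\sum_{j=0}^\infty g(aq^j)q^j$. For $n\in\mathbb N$, $0<q<1$, $x\in[0,\infty)$ define $p^q_{n,k}(x)=\left[\begin{array}{c}n+k-1\\k\end{array}\right]_q q^{k(k-1)/2}\frac{x^k}{(1+x)_q^{n+k}}$ and $s^q_{n,k}(t)=E_q(-[n]_qt)\frac{([n]_qt)^k}{[k]_q!}$. The $q$-Baskakov–Szász–Stancu operators with parameters $0\le\alpha\le\beta$ are $$\mathfrak{D}_n^{(\alpha,\beta)}(f;q;x)=[n]_q\sum_{k=0}^\infty p^q_{n,k}(x)\int_0^{q/(1-q^n)} q^{-k-1}s^q_{n,k}(t)\, f\!\left(\frac{[n]_q t q^{-k}+\alpha}{[n]_q+\beta}\right)d_qt .$$ With $q=q_n$, $[n]_q$ means $[n]_{q_n}$. Statistical convergence: for $K\subseteq\mathbb N$, its natural density is $\delta(K)=\lim_n \frac1n|\{j\le n: j\in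 K\}|$ (if it exists). A real sequence $(x_j)$ is statistically convergent to $L$, written $st-\lim_n x_n=L$, if for every $\epsilon>0$, $\delta(\{j:|x_j-L|\ge\epsilon\})=0$. Modulus of continuity: for bounded continuous $f$ on $[0,\infty)$ and $\delta>0$, $\omega(f;\delta)=\sup\{|f(t)-f(x)|: t,x\in[0,\infty),\ |t-x|\le\delta\}$. *)

From Stdlib Require Import Reals Lra Lia Classical ClassicalEpsilon ClassicalDescription.
Open Scope R_scope.

(* Sum of a real series: the limit of partial sums if it converges
   (chosen by classical choice; arbitrary otherwise). *)
Definition Series (u : nat -> R) : R :=
  epsilon (inhabits 0) (fun l => infinite_sum u l).

Definition qint (q : R) (n : nat) : R := (1 - q ^ n) / (1 - q).

Fixpoint qfact (q : R) (k : nat) : R :=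
  match k with
  | O => 1
  | S k' => qint q (S k') * qfact q k'
  end.

Definition qbinom (q : R) (n k : nat) : R :=
  qfact q n / (qfact q k * qfact q (n - k)).

Fixpoint qpoch (q x : R) (m : nat) : R :=
  match m with
  | O => 1
  | S m' => qpoch q x m' * (1 + q ^ m' * x)
  end.

Definition qtri (q : R) (k : nat) : R := q ^ (Nat.div (k * (k - 1)) 2).

Definition Eq (q z : R) : R :=
  Series (fun k => qtri q k * z ^ k / qfact q k).

Definition jackson (q a : R) (g : R -> R) : R :=
  (1 - q) * a * Series (fun j => g (a * q ^ j) * q ^ j).

Definition p_nk (q : R) (n k : nat) (x : R) : R :=
  qbinom q (n + k - 1) k * qtri q k * x ^ k / qpoch q x (n + k).

Definition s_nk (q : R) (n k : nat) (t : R) : R :=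
  Eq q (- (qint q n * t)) * (qint q n * t) ^ k / qfact q k.

Definition BSS (alpha beta : R) (f : R -> R) (q : R) (n : nat) (x : R) : R :=
  qint q n *
  Series (fun k =>
    p_nk q n k x *
    jackson q (q / (1 - q ^ n))
      (fun t => / q ^ (k + 1) * s_nk q n k t *
                f ((qint q n * t / q ^ k + alpha) / (qint q n + beta)))).

Definition indic (P : Prop) : R :=
  if excluded_middle_informative P then 1 else 0.

(* natural density of K ⊆ N (N = {1,2,...}) is 0 *)
Definition density_zero (K : nat -> Prop) : Prop :=
  Un_cv (fun m => sum_f_R0 (fun j => indic (K (S j))) m / INR (S m)) 0.

Definition st_lim (u : nat -> R) (L : R) : Prop :=
  forall eps : R, eps > 0 -> density_zero (fun j => Rabs (u j - L) >= eps).

Definition omega (f : R -> R) (d : R) : R :=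
  epsilon (inhabits 0)
    (is_lub (fun v => exists t x, 0 <= t /\ 0 <= x /\ Rabs (t - x) <= d /\
                                  v = Rabs (f t - f x))).

Definition delta_n (alpha beta q : R) (n : nat) (x : R) : R :=
  let N := qint q n in
  (N * (q * N + 1) / (q * (N + beta) ^ 2) + 1 - 2 * N / (N + beta)) * x ^ 2
  + ((N + q ^ 2 * N - 2 * alpha * beta - 2 * q * beta) / (N + beta) ^ 2) * x
  + (q ^ 2 * (1 + q) + 2 * q * alpha + alpha ^ 2) / (N + beta) ^ 2.

From Pilot Require Import Defs.
From Stdlib Require Import Reals Lra Lia ClassicalEpsilon ZArith.
From Coquelicot Require Import Coquelicot.
Open Scope R_scope.

(** For fixed [n] and [q] the operator is an explicit double average of values of [f].
    The outer weights [p_nk] are nonnegative and sum to [1] (a q-Pascal recursion in [n]).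
    The Jackson integral turns each inner integral into a series over the nodes [q^j], with
    weights built from [E_q(-q^j/(1-q))]; the functional equation
    [E_q(z) = (1 + (1-q) z) E_q(qz)] shows these values are [prod_(i>=j) (1 - q^i)], so the
    weights are nonnegative and their moments telescope to closed forms. Combining the first
    two moments of both averages, the second moment of the Stancu points about [x] is exactly
    [delta_n(x)]. Since [|f t - f x| <= omega(d) (1 + (t - x)^2 / d^2)], averaging with
    [d^2 = delta_n(x)] gives the factor [2]. *)

Lemma Series_of_is_series (u : nat -> R) (l : R) : is_series u l -> Defs.Series u = l.
Proof.
  intro H. apply is_series_Reals in H. unfold Defs.Series.
  apply (uniqueness_sum u); [apply epsilon_spec; exists l|]; exact H.
Qed.

Lemma is_series_plus_R (a b : nat -> R) (la lb : R) :
  is_series a la -> is_series b lb -> is_series (fun n => a n + b n) (la + lb).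
Proof. exact (is_series_plus a b la lb). Qed.

Lemma is_series_minus_R (a b : nat -> R) (la lb : R) :
  is_series a la -> is_series b lb -> is_series (fun n => a n - b n) (la - lb).
Proof. exact (is_series_minus a b la lb). Qed.

Lemma is_series_scal_R (c : R) (a : nat -> R) (l : R) :
  is_series a l -> is_series (fun n => c * a n) (c * l).
Proof. exact (is_series_scal_l c a l). Qed.

Lemma is_series_ext_val (a b : nat -> R) (l l' : R) :
  (forall n, a n = b n) -> l = l' -> is_series a l -> is_series b l'.
Proof. intros Hab <-. apply is_series_ext, Hab. Qed.

Lemma is_series_abs_le (b e : nat -> R) (E : R) :
  (forall k, Rabs (b k) <= e k) -> is_series e E -> ex_series b /\ Rabs (Series b) <= E.
Proof.
  intros Hb He.
  assert (Ee : ex_series e) by (exists E; exact He).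
  assert (Ea : ex_series (fun n => Rabs (b n))).
  { apply (@ex_series_le _ R_CompleteNormedModule _ e); [|exact Ee].
    intro k. change (Rabs (Rabs (b k)) <= e k). rewrite Rabs_Rabsolu. apply Hb. }
  split; [apply ex_series_Rabs, Ea|].
  eapply Rle_trans; [apply Series_Rabs, Ea|].
  rewrite <- (is_series_unique e E He).
  apply Series_le; [intro k; split; [apply Rabs_pos|apply Hb]|exact Ee].
Qed.

Lemma is_series_tail (a : nat -> R) (l : R) :
  is_series a l -> is_series (fun k => a (S k)) (l - a O).
Proof.
  intro H. apply (@is_series_incr_1 _ R_NormedModule a).
  eapply is_series_ext_val; [reflexivity| |exact H]. unfold plus; simpl; ring.
Qed.

Lemma is_series_cons (a : nat -> R) (l : R) :
  is_series (fun k => a (S k)) l -> is_series a (l + a O).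
Proof.
  intro H. apply (@is_series_decr_1 _ R_NormedModule a).
  eapply is_series_ext_val; [reflexivity| |exact H]. unfold plus, opp; simpl; ring.
Qed.

Lemma is_series_head_le (a : nat -> R) (l : R) :
  (forall n, 0 <= a n) -> is_series a l -> a O <= l.
Proof.
  intros Ha H.
  assert (Hs : forall N, a O <= sum_n a N).
  { induction N; [rewrite sum_O; lra|].
    rewrite sum_Sn. unfold plus; simpl. specialize (Ha (S N)). lra. }
  apply (is_lim_seq_le (fun _ => a O) (sum_n a) (a O) l Hs (is_lim_seq_const _) H).
Qed.

Lemma ex_series_ratio_le (u : nat -> R) (K0 : nat) (r : R) : 0 <= r < 1 ->
  (forall k, (K0 <= k)%nat -> Rabs (u (S k)) <= r * Rabs (u k)) -> ex_series u.
Proof.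
  intros Hr H.
  apply ex_series_Rabs, (ex_series_incr_n _ K0).
  apply (@ex_series_le _ R_CompleteNormedModule _ (fun k => Rabs (u K0) * r ^ k)).
  - intro k. change (Rabs (Rabs (u (K0 + k)%nat)) <= Rabs (u K0) * r ^ k).
    rewrite Rabs_Rabsolu. induction k.
    + rewrite Nat.add_0_r. simpl. lra.
    + replace (K0 + S k)%nat with (S (K0 + k)) by lia.
      eapply Rle_trans; [apply H; lia|]. simpl.
      replace (Rabs (u K0) * (r * r ^ k)) with (r * (Rabs (u K0) * r ^ k)) by ring.
      apply Rmult_le_compat_l; lra.
  - destruct (ex_series_geom r) as [l Hl]; [rewrite Rabs_pos_eq; lra|].
    exists (Rabs (u K0) * l). exact (is_series_scal_R _ _ _ Hl).
Qed.

Lemma is_series_telescope (d : nat -> R) (L : R) :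
  is_lim_seq d L -> is_series (fun j => d (S j) - d j) (L - d O).
Proof.
  intro H.
  assert (Hs : forall N, sum_n (fun j => d (S j) - d j) N = d (S N) - d O).
  { induction N; [now rewrite sum_O|]. rewrite sum_Sn, IHN. unfold plus; simpl. ring. }
  change (is_lim_seq (sum_n (fun j => d (S j) - d j)) (L - d O)).
  apply (is_lim_seq_ext (fun N => d (S N) - d O)); [intro N; now rewrite Hs|].
  apply is_lim_seq_minus'; [apply (is_lim_seq_incr_1 d), H|apply is_lim_seq_const].
Qed.

Lemma average_deviation (w g h : nat -> R) (c H : R) :
  (forall j, 0 <= w j) -> is_series w 1 ->
  (forall j, Rabs (g j - c) <= h j) -> is_series (fun j => w j * h j) H ->
  ex_series (fun j => w j * g j) /\ Rabs (Series (fun j => w j * g j) - c) <= H.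
Proof.
  intros Hw Hw1 Hg Hh.
  set (b := fun j => w j * g j - c * w j).
  destruct (is_series_abs_le b (fun j => w j * h j) H) as [Hb Hle]; [|exact Hh|].
  { intro j. unfold b. replace (w j * g j - c * w j) with (w j * (g j - c)) by ring.
    rewrite Rabs_mult, Rabs_pos_eq by apply Hw. apply Rmult_le_compat_l; [apply Hw|apply Hg]. }
  assert (Hwg : is_series (fun j => w j * g j) (Series b + c)).
  { eapply is_series_ext_val;
      [| |exact (is_series_plus_R _ _ _ _ (Series_correct _ Hb) (is_series_scal_R c _ _ Hw1))].
    - intro j. unfold b. ring.
    - ring. }
  split; [eexists; exact Hwg|].
  rewrite (is_series_unique _ _ Hwg). replace (Series b + c - c) with (Series b) by ring.
  exact Hle.
Qed.

(** * q-integers, q-factorials and the q-exponential *)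

Lemma pow_le_1 (x : R) (k : nat) : 0 <= x <= 1 -> x ^ k <= 1.
Proof. intro Hx. rewrite <- (pow1 k). apply pow_incr, Hx. Qed.

Lemma qtri_S (q : R) (k : nat) : qtri q (S k) = qtri q k * q ^ k.
Proof.
  unfold qtri. rewrite <- pow_add. f_equal.
  replace (S k * (S k - 1))%nat with (k * (k - 1) + k * 2)%nat by (destruct k; simpl; lia).
  apply Nat.div_add. lia.
Qed.

Lemma is_lim_seq_scal_geom (q c : R) : 0 < q < 1 -> is_lim_seq (fun j => c * q ^ j) 0.
Proof.
  intro Hq. replace (Finite 0) with (Rbar_mult c 0) by (simpl; f_equal; ring).
  apply is_lim_seq_scal_l, is_lim_seq_geom. rewrite Rabs_pos_eq; lra.
Qed.

Definition Eq_term (q z : R) (k : nat) : R := qtri q k * z ^ k / qfact q k.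

(** At the [j]-th node [t = q^(j+1) / (1 - q^n)] of the Jackson integral,
    [E_q(-[n]_q t) = Eq_node q (S j)] (note the shift). *)
Definition Eq_node (q : R) (j : nat) : R := Eq q (- (q ^ j / (1 - q))).

Fixpoint qprod (q : R) (r : nat) : R :=
  match r with O => 1 | S r' => qprod q r' * (1 - q ^ S r') end.

Section QCalculus.

Variable q : R.
Hypothesis q_01 : 0 < q < 1.

Lemma qint_mul (k : nat) : (1 - q) * qint q k = 1 - q ^ k.
Proof. unfold qint. field. lra. Qed.

Lemma qint_S (n : nat) : qint q (S n) = 1 + q * qint q n.
Proof. unfold qint. simpl. field. lra. Qed.

Lemma qint_ge_1 (n : nat) : 1 <= qint q (S n).
Proof.
  induction n.
  - unfold qint. simpl. replace ((1 - q * 1) / (1 - q)) with 1 by (field; lra). lra.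
  - rewrite qint_S. nra.
Qed.

Lemma qfact_ge_1 (k : nat) : 1 <= qfact q k.
Proof.
  induction k; simpl; [lra|].
  assert (1 <= qint q (S k)) by apply qint_ge_1. nra.
Qed.

Lemma qfact_pos (k : nat) : 0 < qfact q k.
Proof. pose proof (qfact_ge_1 k). lra. Qed.

Lemma qtri_pos (k : nat) : 0 < qtri q k.
Proof. apply pow_lt; lra. Qed.

Lemma qtri_le_1 (k : nat) : qtri q k <= 1.
Proof. apply pow_le_1; lra. Qed.

Lemma Eq_term_S (z : R) (k : nat) :
  Eq_term q z (S k) = q ^ k * z / qint q (S k) * Eq_term q z k.
Proof.
  unfold Eq_term. rewrite qtri_S. simpl qfact.
  pose proof (qfact_pos k). pose proof (qint_ge_1 k).
  simpl. field. lra.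
Qed.

Lemma ex_series_Eq_term (z : R) : ex_series (Eq_term q z).
Proof.
  destruct (pow_lt_1_zero q ltac:(rewrite Rabs_pos_eq; lra) (/ (2 * (Rabs z + 1)))) as [K HK].
  { apply Rinv_0_lt_compat. pose proof (Rabs_pos z). lra. }
  apply (ex_series_ratio_le _ K (1/2)); [lra|].
  intros k Hk. rewrite Eq_term_S.
  pose proof (qint_ge_1 k). pose proof (Rabs_pos z). pose proof (Rabs_pos (Eq_term q z k)).
  specialize (HK k Hk). rewrite Rabs_pos_eq in HK by (apply pow_le; lra).
  assert (0 <= q ^ k) by (apply pow_le; lra).
  assert (Hb : q ^ k * Rabs z <= 1/2).
  { apply (Rmult_lt_compat_r (2 * (Rabs z + 1))) in HK; [|lra].
    rewrite Rinv_l in HK; nra. }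
  unfold Rdiv. rewrite !Rabs_mult, (Rabs_pos_eq (q ^ k)), Rabs_inv, (Rabs_pos_eq (qint q (S k))) by lra.
  assert (Hi : 0 < / qint q (S k) <= 1).
  { split; [apply Rinv_0_lt_compat; lra|]. rewrite <- Rinv_1. apply Rinv_le_contravar; lra. }
  assert (q ^ k * Rabs z * / qint q (S k) <= 1/2) by nra.
  nra.
Qed.

Lemma is_series_Eq (z : R) : is_series (Eq_term q z) (Eq q z).
Proof.
  destruct (ex_series_Eq_term z) as [l Hl].
  change (Eq q z) with (Defs.Series (Eq_term q z)).
  rewrite (Series_of_is_series _ l Hl). exact Hl.
Qed.

Lemma Eq_shift (z : R) : Eq q z = (1 + (1 - q) * z) * Eq q (q * z).
Proof.
  pose proof (is_series_Eq z) as H1. pose proof (is_series_Eq (q * z)) as H2.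
  assert (H3 : is_series (fun k => Eq_term q z (S k) - Eq_term q (q * z) (S k))
                 (Eq q z - Eq q (q * z))).
  { eapply is_series_ext_val; [reflexivity| |exact (is_series_tail _ _ (is_series_minus_R _ _ _ _ H1 H2))].
    unfold Eq_term. simpl. field. }
  assert (H4 : is_series (fun k => Eq_term q z (S k) - Eq_term q (q * z) (S k))
                 ((1 - q) * z * Eq q (q * z))).
  { eapply is_series_ext_val; [| reflexivity | exact (is_series_scal_R ((1 - q) * z) _ _ H2)].
    intro k. unfold Eq_term. rewrite qtri_S. simpl qfact. rewrite Rpow_mult_distr.
    pose proof (qfact_pos k). pose proof (qint_ge_1 k).
    assert (q * q ^ k < 1) by (pose proof (pow_le_1 q k ltac:(lra)); nra).
    unfold qint. simpl pow. rewrite !Rpow_mult_distr. field. lra. }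
  apply is_series_unique in H3. apply is_series_unique in H4. lra.
Qed.

Lemma Eq_term_abs_le (z : R) (k : nat) : Rabs (Eq_term q z k) <= Rabs z ^ k.
Proof.
  unfold Eq_term, Rdiv. rewrite !Rabs_mult, <- RPow_abs.
  pose proof (qtri_pos k). pose proof (qtri_le_1 k). pose proof (qfact_ge_1 k).
  rewrite (Rabs_pos_eq (qtri q k)), Rabs_inv, (Rabs_pos_eq (qfact q k)) by lra.
  assert (0 < / qfact q k <= 1).
  { split; [apply Rinv_0_lt_compat; lra|]. rewrite <- Rinv_1. apply Rinv_le_contravar; lra. }
  assert (0 <= Rabs z ^ k) by (apply pow_le, Rabs_pos).
  assert (qtri q k * / qfact q k <= 1) by nra. nra.
Qed.

Lemma Eq_near_0 (z : R) : Rabs z <= 1/2 -> Rabs (Eq q z - 1) <= 2 * Rabs z.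
Proof.
  intro Hz. pose proof (Rabs_pos z).
  pose proof (is_series_tail _ _ (is_series_Eq z)) as Htail.
  replace (Eq_term q z 0) with 1 in Htail by (unfold Eq_term, qtri; simpl; field).
  assert (Hg : is_series (fun k => Rabs z * Rabs z ^ k) (Rabs z * / (1 - Rabs z))).
  { apply is_series_scal_R, is_series_geom. rewrite Rabs_pos_eq; lra. }
  destruct (is_series_abs_le _ _ _ (fun k => Eq_term_abs_le z (S k)) Hg) as [_ Hb].
  rewrite (is_series_unique _ _ Htail) in Hb.
  assert (/ (1 - Rabs z) <= 2).
  { replace 2 with (/ (1/2)) by field. apply Rinv_le_contravar; lra. }
  nra.
Qed.

Lemma Eq_node_S (j : nat) : Eq_node q j = (1 - q ^ j) * Eq_node q (S j).
Proof.
  unfold Eq_node. rewrite Eq_shift. f_equal.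
  - field. lra.
  - f_equal. simpl. field. lra.
Qed.

Lemma Eq_node_0 : Eq_node q 0 = 0.
Proof. rewrite Eq_node_S. simpl. ring. Qed.

Lemma Eq_node_lim : is_lim_seq (Eq_node q) 1.
Proof.
  destruct (pow_lt_1_zero q ltac:(rewrite Rabs_pos_eq; lra) ((1 - q) / 2)) as [K HK]; [lra|].
  apply (is_lim_seq_incr_n _ K).
  apply (is_lim_seq_le_le (fun n => 1 - 2 / (1 - q) * q ^ (n + K)) _
                           (fun n => 1 + 2 / (1 - q) * q ^ (n + K))).
  - intro n.
    assert (Hn := HK (n + K)%nat ltac:(lia)). rewrite Rabs_pos_eq in Hn by (apply pow_le; lra).
    assert (Hz : 0 <= q ^ (n + K) / (1 - q) <= 1/2).
    { split; [apply Rmult_le_pos; [apply pow_le; lra|left; apply Rinv_0_lt_compat; lra]|].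
      apply (Rmult_le_reg_r (1 - q)); [lra|].
      unfold Rdiv. rewrite Rmult_assoc, Rinv_l by lra. lra. }
    pose proof (Eq_near_0 (- (q ^ (n + K) / (1 - q)))) as HE.
    rewrite Rabs_Ropp, Rabs_pos_eq in HE by lra.
    apply Rabs_le_between in HE; [|lra]. unfold Eq_node.
    replace (2 / (1 - q) * q ^ (n + K)) with (2 * (q ^ (n + K) / (1 - q))) by (field; lra).
    lra.
  - replace (Finite 1) with (Finite (1 - 0)) by (f_equal; ring).
    apply is_lim_seq_minus'; [apply is_lim_seq_const|].
    apply (is_lim_seq_incr_n (fun n => 2 / (1 - q) * q ^ n)), is_lim_seq_scal_geom, q_01.
  - replace (Finite 1) with (Finite (1 + 0)) by (f_equal; ring).
    apply is_lim_seq_plus'; [apply is_lim_seq_const|].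
    apply (is_lim_seq_incr_n (fun n => 2 / (1 - q) * q ^ n)), is_lim_seq_scal_geom, q_01.
Qed.

(** Downward induction from the tail, where [Eq_node] is close to [1]. *)
Lemma Eq_node_pos (j : nat) : (1 <= j)%nat -> 0 < Eq_node q j.
Proof.
  intro Hj.
  destruct (proj1 (is_lim_seq_Reals _ _) Eq_node_lim (1/2) ltac:(lra)) as [K HK].
  assert (Hd : forall d j, (1 <= j)%nat -> 0 < Eq_node q (j + d) -> 0 < Eq_node q j).
  { induction d; intros j0 Hj0 Hp.
    - rewrite Nat.add_0_r in Hp. exact Hp.
    - replace (j0 + S d)%nat with (S j0 + d)%nat in Hp by lia.
      apply IHd in Hp; [|lia]. rewrite Eq_node_S.
      assert (q ^ j0 < 1) by (destruct j0; [lia|apply pow_lt_1_compat; [lra|lia]]).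
      apply Rmult_lt_0_compat; lra. }
  apply (Hd K j Hj). specialize (HK (j + K)%nat ltac:(unfold ge; lia)).
  unfold Rdist in HK. apply Rabs_def2 in HK. lra.
Qed.

Lemma Eq_node_nonneg (j : nat) : 0 <= Eq_node q j.
Proof. destruct j; [rewrite Eq_node_0; lra|left; apply Eq_node_pos; lia]. Qed.

Lemma qprod_qfact (k : nat) : qprod q k = (1 - q) ^ k * qfact q k.
Proof.
  induction k; [simpl; ring|].
  change (qprod q (S k)) with (qprod q k * (1 - q ^ S k)).
  rewrite IHk, <- (qint_mul (S k)). simpl. ring.
Qed.

(** By [Eq_node_S] the series telescopes, by induction on [r]. *)
Lemma is_series_Eq_node_moment (r : nat) :
  is_series (fun j => (q ^ j) ^ S r * Eq_node q (S j)) (qprod q r).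
Proof.
  induction r.
  - eapply is_series_ext_val; [| |exact (is_series_telescope _ 1 Eq_node_lim)].
    + intro j. cbv beta. rewrite (Eq_node_S j). simpl. ring.
    + rewrite Eq_node_0. simpl. ring.
  - set (d := fun j => (q ^ j) ^ S r * Eq_node q j).
    assert (Hd : is_lim_seq d 0).
    { unfold d. replace (Finite 0) with (Finite (0 * 1)) by (f_equal; ring).
      apply is_lim_seq_mult'; [|exact Eq_node_lim].
      apply (is_lim_seq_ext (fun j => 1 * (q ^ S r) ^ j)).
      { intro j. rewrite <- !pow_mult, Nat.mul_comm. ring. }
      apply is_lim_seq_scal_geom. split; [apply pow_lt; lra|apply pow_lt_1_compat; [lra|lia]]. }
    eapply is_series_ext_val;
      [| |exact (is_series_plus_R _ _ _ _ (is_series_telescope d 0 Hd)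
                   (is_series_scal_R (1 - q ^ S r) _ _ IHr))].
    + intro j. unfold d. cbv beta. rewrite (Eq_node_S j). simpl. rewrite Rpow_mult_distr. ring.
    + unfold d. rewrite Eq_node_0. simpl. ring.
Qed.

Lemma qtri_pow_lim_0 (x : R) : 0 <= x -> is_lim_seq (fun K => qtri q K * x ^ K) 0.
Proof.
  intro Hx. apply ex_series_lim_0.
  destruct (pow_lt_1_zero q ltac:(rewrite Rabs_pos_eq; lra) (/ (2 * (x + 1)))) as [K HK].
  { apply Rinv_0_lt_compat. lra. }
  apply (ex_series_ratio_le _ K (1/2)); [lra|].
  intros k Hk. rewrite qtri_S. simpl pow.
  specialize (HK k Hk). rewrite Rabs_pos_eq in HK by (apply pow_le; lra).
  assert (0 <= q ^ k) by (apply pow_le; lra).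
  assert (Hb : q ^ k * x <= 1/2).
  { apply (Rmult_lt_compat_r (2 * (x + 1))) in HK; [|lra].
    rewrite Rinv_l in HK; nra. }
  replace (qtri q k * q ^ k * (x * x ^ k)) with ((q ^ k * x) * (qtri q k * x ^ k)) by ring.
  rewrite Rabs_mult, (Rabs_pos_eq (q ^ k * x)) by (apply Rmult_le_pos; lra).
  apply Rmult_le_compat_r; [apply Rabs_pos|lra].
Qed.

Section Baskakov.

Variable x : R.
Hypothesis x_ge_0 : 0 <= x.

Lemma qpoch_ge_1 (m : nat) : 1 <= qpoch q x m.
Proof.
  induction m; simpl; [lra|].
  assert (0 <= q ^ m * x) by (apply Rmult_le_pos; [apply pow_le|]; lra). nra.
Qed.

Lemma p_nk_succ (m k : nat) :
  p_nk q (S m) k x =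
  qfact q (m + k) / (qfact q k * qfact q m) * qtri q k * x ^ k / qpoch q x (S (m + k)).
Proof.
  unfold p_nk, qbinom.
  replace (S m + k - 1)%nat with (m + k)%nat by lia.
  replace (m + k - k)%nat with m by lia.
  now replace (S m + k)%nat with (S (m + k)) by lia.
Qed.

Ltac nonzero :=
  repeat match goal with
  | |- _ /\ _ => split
  | |- qint q (S ?k) <> 0 => let H := fresh in pose proof (qint_ge_1 k) as H; lra
  | |- qfact q ?k <> 0 => let H := fresh in pose proof (qfact_pos k) as H; lra
  | |- qpoch q x ?k <> 0 => let H := fresh in pose proof (qpoch_ge_1 k) as H; lra
  | |- q ^ ?k <> 0 => apply pow_nonzero; lra
  | |- 1 + ?t * x <> 0 => let H := fresh in
        assert (H : 0 <= t * x) by (repeat apply Rmult_le_pos; try apply pow_le; lra); lra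
  | |- _ <> 0 => lra
  end.

Lemma p_nk_nonneg (m k : nat) : 0 <= p_nk q (S m) k x.
Proof.
  rewrite p_nk_succ.
  pose proof (qfact_pos (m + k)). pose proof (qfact_pos k). pose proof (qfact_pos m).
  pose proof (qtri_pos k). pose proof (qpoch_ge_1 (S (m + k))).
  assert (0 <= x ^ k) by (apply pow_le; lra).
  unfold Rdiv. repeat apply Rmult_le_pos; try lra; left; apply Rinv_0_lt_compat; nra.
Qed.

Lemma p_nk_0_pos (m : nat) : 0 < p_nk q (S m) 0 x.
Proof.
  rewrite p_nk_succ, Nat.add_0_r, pow_O.
  pose proof (qfact_pos m). pose proof (qfact_pos 0). pose proof (qtri_pos 0).
  pose proof (qpoch_ge_1 (S m)).
  unfold Rdiv. repeat apply Rmult_lt_0_compat; try apply Rinv_0_lt_compat; nra.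
Qed.

Lemma p_nk_shift (m k : nat) :
  qint q (S k) * p_nk q (S m) (S k) x = qint q (S m) * q ^ k * x * p_nk q (S (S m)) k x.
Proof.
  rewrite !p_nk_succ.
  replace (m + S k)%nat with (S (m + k)) by lia. replace (S m + k)%nat with (S (m + k)) by lia.
  rewrite qtri_S. simpl qfact. simpl pow. field. nonzero.
Qed.

Lemma p_nk_pascal (m k : nat) :
  p_nk q (S (S m)) (S k) x * (1 + q ^ (S m + S k) * x) =
  p_nk q (S m) (S k) x + q ^ (S m + k) * x * p_nk q (S (S m)) k x.
Proof.
  rewrite !p_nk_succ.
  replace (m + S k)%nat with (S (m + k)) by lia. replace (S m + k)%nat with (S (m + k)) by lia.
  replace (S m + S k)%nat with (S (S (m + k))) by lia.
  rewrite qtri_S.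
  change (qfact q (S (S (m + k)))) with (qint q (S (S (m + k))) * qfact q (S (m + k))).
  replace (qint q (S (S (m + k)))) with (qint q (S m) + q ^ S m * qint q (S k))
    by (unfold qint; replace (S (S (m + k))) with (S m + S k)%nat by lia;
        rewrite pow_add; field; lra).
  change (qpoch q x (S (S (S (m + k)))))
    with (qpoch q x (S (S (m + k))) * (1 + q ^ S (S (m + k)) * x)).
  simpl qfact.
  replace (q ^ S (S (m + k))) with (q * q ^ m * (q * q ^ k))
    by (replace (S (S (m + k))) with (S m + S k)%nat by lia; now rewrite pow_add).
  simpl pow. rewrite (pow_add q m k). field. nonzero.
Qed.

Lemma p_nk_pascal_0 (m : nat) :
  p_nk q (S (S m)) 0 x * (1 + q ^ S m * x) = p_nk q (S m) 0 x.
Proof.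
  rewrite !p_nk_succ, !Nat.add_0_r.
  change (qpoch q x (S (S m))) with (qpoch q x (S m) * (1 + q ^ S m * x)).
  change (qfact q (S m)) with (qint q (S m) * qfact q m). unfold qtri. simpl. field. nonzero.
Qed.

Lemma p_nk_1_partial_sum (K : nat) :
  sum_n (fun k => p_nk q 1 k x) K = 1 - qtri q (S K) * x ^ S K / qpoch q x (S K).
Proof.
  induction K.
  - rewrite sum_O, p_nk_succ. unfold qtri. simpl. field. lra.
  - rewrite sum_Sn, IHK. unfold plus; simpl. rewrite p_nk_succ. simpl (0 + S K)%nat.
    rewrite (qtri_S q (S K)).
    change (qpoch q x (S (S K))) with (qpoch q x (S K) * (1 + q ^ S K * x)).
    replace (qfact q (S K) / (qfact q (S K) * qfact q 0)) with 1
      by (simpl qfact at 3; field; nonzero).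
    change (qpoch q x (S K)) with (qpoch q x K * (1 + q ^ K * x)). simpl pow. field. nonzero.
Qed.

Lemma is_series_p_nk_1 : is_series (fun k => p_nk q 1 k x) 1.
Proof.
  change (is_lim_seq (sum_n (fun k => p_nk q 1 k x)) 1).
  apply (is_lim_seq_ext (fun K => 1 - qtri q (S K) * x ^ S K / qpoch q x (S K)));
    [intro K; now rewrite p_nk_1_partial_sum|].
  replace (Finite 1) with (Finite (1 - 0)) by (f_equal; ring).
  apply is_lim_seq_minus'; [apply is_lim_seq_const|].
  apply (is_lim_seq_le_le (fun _ => 0) _ (fun K => qtri q (S K) * x ^ S K)).
  - intro K. pose proof (qpoch_ge_1 (S K)).
    assert (0 <= qtri q (S K) * x ^ S K)
      by (apply Rmult_le_pos; [left; apply qtri_pos|apply pow_le; lra]).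
    assert (0 < / qpoch q x (S K) <= 1).
    { split; [apply Rinv_0_lt_compat; lra|]. rewrite <- Rinv_1. apply Rinv_le_contravar; lra. }
    unfold Rdiv. split; nra.
  - apply is_lim_seq_const.
  - apply (is_lim_seq_incr_1 (fun K => qtri q K * x ^ K)), qtri_pow_lim_0, x_ge_0.
Qed.

(** By [p_nk_pascal] the partial sums of the [m+2] basis differ from those of the
    [m+1] basis by a term that tends to [0]. *)
Lemma is_series_p_nk_succ (m : nat) :
  is_series (fun k => p_nk q (S m) k x) 1 -> is_series (fun k => p_nk q (S (S m)) k x) 1.
Proof.
  set (a1 := fun k => p_nk q (S m) k x). set (a2 := fun k => p_nk q (S (S m)) k x).
  intro H1. change (is_lim_seq (sum_n a1) 1) in H1. change (is_lim_seq (sum_n a2) 1).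
  assert (Hp : forall K, sum_n a2 K + q ^ (S m + K) * x * a2 K = sum_n a1 K).
  { induction K.
    - rewrite !sum_O. unfold a1, a2. rewrite <- (p_nk_pascal_0 m), Nat.add_0_r. ring.
    - rewrite !sum_Sn. unfold plus; simpl. rewrite <- IHK. unfold a1, a2.
      pose proof (p_nk_pascal m K) as P. simpl in P |- *. lra. }
  assert (Hnn : forall k, 0 <= a2 k) by (intro; apply p_nk_nonneg).
  assert (Hpow : forall K, 0 <= q ^ (S m + K) * x) by (intro; apply Rmult_le_pos; [apply pow_le|]; lra).
  assert (Hs : forall K, a2 K <= sum_n a1 K).
  { intro K. rewrite <- Hp.
    assert (a2 K <= sum_n a2 K).
    { destruct K; [rewrite sum_O; lra|].
      rewrite sum_Sn. unfold plus; simpl.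
      enough (0 <= sum_n a2 K) by lra.
      clear -Hnn. induction K; [rewrite sum_O; apply Hnn|].
      rewrite sum_Sn. unfold plus; simpl. specialize (Hnn (S K)). lra. }
    specialize (Hpow K). specialize (Hnn K). nra. }
  assert (Ht : is_lim_seq (fun K => q ^ (S m + K) * x * a2 K) 0).
  { apply (is_lim_seq_le_le (fun _ => 0) _ (fun K => (q ^ S m * x * q ^ K) * sum_n a1 K)).
    - intro K. specialize (Hpow K). specialize (Hnn K). specialize (Hs K).
      rewrite pow_add in *. split; [nra|].
      replace (q ^ S m * q ^ K * x * a2 K) with ((q ^ S m * x * q ^ K) * a2 K) by ring.
      apply Rmult_le_compat_l; [nra|exact Hs].
    - apply is_lim_seq_const.
    - replace (Finite 0) with (Finite (0 * 1)) by (f_equal; ring).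
      apply is_lim_seq_mult'; [apply is_lim_seq_scal_geom, q_01|exact H1]. }
  apply (is_lim_seq_ext (fun K => sum_n a1 K - q ^ (S m + K) * x * a2 K));
    [intro K; rewrite <- Hp; ring|].
  replace (Finite 1) with (Finite (1 - 0)) by (f_equal; ring).
  apply is_lim_seq_minus'; assumption.
Qed.

Lemma is_series_p_nk (m : nat) : is_series (fun k => p_nk q (S m) k x) 1.
Proof. induction m; [exact is_series_p_nk_1|exact (is_series_p_nk_succ m IHm)]. Qed.

Lemma p_nk_qinv (m k : nat) :
  / q ^ S k * p_nk q (S m) (S k) x =
  p_nk q (S m) (S k) x + (1 - q) * qint q (S m) * x / q * p_nk q (S (S m)) k x.
Proof.
  pose proof (p_nk_shift m k) as H. pose proof (qint_mul (S k)) as E.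
  pose proof (qint_ge_1 k). assert (0 < q ^ k) by (apply pow_lt; lra).
  replace ((1 - q) * qint q (S m) * x / q * p_nk q (S (S m)) k x)
    with ((1 - q) / q / q ^ k * (qint q (S m) * q ^ k * x * p_nk q (S (S m)) k x)) by (field; lra).
  rewrite <- H. simpl pow in E |- *.
  replace ((1 - q) / q / q ^ k * (qint q (S k) * p_nk q (S m) (S k) x))
    with (((1 - q) * qint q (S k)) * p_nk q (S m) (S k) x / (q * q ^ k)) by (field; lra).
  rewrite E. field. lra.
Qed.

Lemma is_series_p_nk_qinv (m : nat) :
  is_series (fun k => / q ^ k * p_nk q (S m) k x) (1 + (1 - q) * qint q (S m) * x / q).
Proof.
  pose proof (is_series_plus_R _ _ _ _ (is_series_tail _ _ (is_series_p_nk m))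
    (is_series_scal_R ((1 - q) * qint q (S m) * x / q) _ _ (is_series_p_nk (S m)))) as H.
  eapply is_series_ext_val in H; [| intro k; cbv beta; rewrite <- p_nk_qinv; reflexivity|reflexivity].
  eapply is_series_ext_val; [reflexivity| |exact (is_series_cons (fun k => / q ^ k * p_nk q (S m) k x) _ H)].
  simpl. field. lra.
Qed.

Lemma is_series_p_nk_qinv2 (m : nat) :
  is_series (fun k => / q ^ k * / q ^ k * p_nk q (S m) k x)
    (1 + (1 - q) * qint q (S m) * x / q
     + (1 - q) * qint q (S m) * x / (q * q) * (1 + (1 - q) * qint q (S (S m)) * x / q)).
Proof.
  pose proof (is_series_plus_R _ _ _ _ (is_series_tail _ _ (is_series_p_nk_qinv m))
    (is_series_scal_R ((1 - q) * qint q (S m) * x / (q * q)) _ _ (is_series_p_nk_qinv (S m)))) as H.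
  eapply (is_series_ext_val _ (fun k => / q ^ S k * / q ^ S k * p_nk q (S m) (S k) x)) in H;
    [|intro k; cbv beta|reflexivity].
  2:{ assert (0 < q ^ k) by (apply pow_lt; lra).
      rewrite (Rmult_assoc (/ q ^ S k)), (p_nk_qinv m k), Rmult_plus_distr_l, (p_nk_qinv m k).
      simpl. field. lra. }
  eapply is_series_ext_val;
    [reflexivity| |exact (is_series_cons (fun k => / q ^ k * / q ^ k * p_nk q (S m) k x) _ H)].
  simpl. field. lra.
Qed.

End Baskakov.

End QCalculus.

(** At the [j]-th Jackson node, [[n]_q t = jnode q j], independently of [n]. *)
Definition jnode (q : R) (j : nat) : R := q ^ S j / (1 - q).

Definition szasz_weight (q : R) (k j : nat) : R :=
  (q / (1 - q)) ^ k / (q ^ k * qfact q k) * ((q ^ j) ^ S k * Eq_node q (S j)).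

Definition stancu_point (q N alpha beta : R) (k j : nat) : R :=
  (jnode q j / q ^ k + alpha) / (N + beta).

Definition stancu_var (q N alpha beta x y : R) : R :=
  let c := q / (1 - q) in let e := alpha - x * (N + beta) in
  (c ^ 2 * (y - q) * (y - q ^ 2) + 2 * e * c * (y - q) + e ^ 2) / (N + beta) ^ 2.

Section Szasz.

Variable q : R.
Hypothesis q_01 : 0 < q < 1.

Lemma szasz_weight_nonneg (k j : nat) : 0 <= szasz_weight q k j.
Proof.
  pose proof (qfact_pos q q_01 k). assert (0 < q ^ k) by (apply pow_lt; lra).
  apply Rmult_le_pos.
  - apply Rmult_le_pos; [apply pow_le, Rlt_le, Rdiv_lt_0_compat; lra|].
    left. apply Rinv_0_lt_compat. nra.
  - apply Rmult_le_pos; [apply pow_le, pow_le; lra|apply Eq_node_nonneg, q_01].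
Qed.

Lemma szasz_const_qprod (k : nat) :
  (q / (1 - q)) ^ k / (q ^ k * qfact q k) * qprod q k = 1.
Proof.
  rewrite (qprod_qfact q q_01). pose proof (qfact_pos q q_01 k).
  assert (0 < q ^ k) by (apply pow_lt; lra).
  replace ((q / (1 - q)) ^ k / (q ^ k * qfact q k) * ((1 - q) ^ k * qfact q k))
    with ((q / (1 - q) * (1 - q)) ^ k / q ^ k) by (rewrite Rpow_mult_distr; field; lra).
  replace (q / (1 - q) * (1 - q)) with q by (field; lra). field. lra.
Qed.

Lemma is_series_szasz_weight (k : nat) : is_series (szasz_weight q k) 1.
Proof.
  rewrite <- (szasz_const_qprod k).
  exact (is_series_scal_R _ _ _ (is_series_Eq_node_moment q q_01 k)).
Qed.

Lemma is_series_szasz_mean (k : nat) :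
  is_series (fun j => szasz_weight q k j * (jnode q j / q ^ k)) (q / (1 - q) * (/ q ^ k - q)).
Proof.
  assert (0 < q ^ k) by (apply pow_lt; lra). pose proof (qfact_pos q q_01 k).
  eapply is_series_ext_val;
    [| |exact (is_series_scal_R ((q / (1 - q)) ^ k / (q ^ k * qfact q k) * (q / (1 - q) / q ^ k))
                _ _ (is_series_Eq_node_moment q q_01 (S k)))].
  - intro j. unfold szasz_weight, jnode. simpl pow. field. lra.
  - simpl qprod.
    transitivity ((q / (1 - q)) ^ k / (q ^ k * qfact q k) * qprod q k
                  * (q / (1 - q) / q ^ k) * (1 - q * q ^ k)); [ring|].
    rewrite szasz_const_qprod. simpl. field. lra.
Qed.

Lemma is_series_szasz_second (k : nat) :
  is_series (fun j => szasz_weight q k j * (jnode q j / q ^ k) ^ 2)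
    ((q / (1 - q)) ^ 2 * (/ q ^ k - q) * (/ q ^ k - q ^ 2)).
Proof.
  assert (0 < q ^ k) by (apply pow_lt; lra). pose proof (qfact_pos q q_01 k).
  eapply is_series_ext_val;
    [| |exact (is_series_scal_R ((q / (1 - q)) ^ k / (q ^ k * qfact q k) * (q / (1 - q) / q ^ k) ^ 2)
                _ _ (is_series_Eq_node_moment q q_01 (S (S k))))].
  - intro j. unfold szasz_weight, jnode. simpl pow. field. lra.
  - simpl qprod.
    transitivity ((q / (1 - q)) ^ k / (q ^ k * qfact q k) * qprod q k
                  * (q / (1 - q) / q ^ k) ^ 2 * (1 - q * q ^ k) * (1 - q * (q * q ^ k))); [ring|].
    rewrite szasz_const_qprod. simpl. field. lra.
Qed.

Lemma is_series_stancu_var (N alpha beta x : R) (k : nat) : 0 < N + beta ->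
  is_series (fun j => szasz_weight q k j * (stancu_point q N alpha beta k j - x) ^ 2)
    (stancu_var q N alpha beta x (/ q ^ k)).
Proof.
  intro HB. set (e := alpha - x * (N + beta)).
  eapply is_series_ext_val;
    [| |exact (is_series_plus_R _ _ _ _
       (is_series_plus_R _ _ _ _
          (is_series_scal_R (/ (N + beta) ^ 2) _ _ (is_series_szasz_second k))
          (is_series_scal_R (2 * e / (N + beta) ^ 2) _ _ (is_series_szasz_mean k)))
       (is_series_scal_R (e ^ 2 / (N + beta) ^ 2) _ _ (is_series_szasz_weight k)))].
  - intro j. unfold stancu_point, e. field. split; [apply pow_nonzero|]; lra.
  - unfold stancu_var. fold e. field. split; [apply pow_nonzero|]; lra.
Qed.

(** Write [(y - q)(y - q^2) = (y - q)^2 + (y - q)(q - q^2)]: a sum of a square and,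
    for [y >= 1], a positive term. *)
Lemma stancu_var_pos (N alpha beta x y : R) : 0 < N + beta -> 1 <= y ->
  0 < stancu_var q N alpha beta x y.
Proof.
  intros HB Hy. unfold stancu_var.
  set (c := q / (1 - q)). set (e := alpha - x * (N + beta)).
  assert (0 < c) by (apply Rdiv_lt_0_compat; lra).
  apply Rdiv_lt_0_compat; [|apply pow_lt; lra].
  replace (c ^ 2 * (y - q) * (y - q ^ 2) + 2 * e * c * (y - q) + e ^ 2)
    with ((c * (y - q) + e) ^ 2 + c ^ 2 * (y - q) * (q - q ^ 2)) by ring.
  assert (0 < c ^ 2 * (y - q) * (q - q ^ 2)).
  { apply Rmult_lt_0_compat; [apply Rmult_lt_0_compat; [apply pow_lt|]|]; nra. }
  pose proof (pow2_ge_0 (c * (y - q) + e)). lra.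
Qed.

Lemma is_series_delta_n (alpha beta x : R) (m : nat) : 0 <= x -> 0 <= beta ->
  is_series (fun k => p_nk q (S m) k x * stancu_var q (qint q (S m)) alpha beta x (/ q ^ k))
    (delta_n alpha beta q (S m) x).
Proof.
  intros Hx Hb.
  set (N := qint q (S m)). set (B := N + beta). set (c := q / (1 - q)). set (e := alpha - x * B).
  assert (HN : 1 <= N) by apply (qint_ge_1 q q_01).
  eapply is_series_ext_val;
    [| |exact (is_series_plus_R _ _ _ _
       (is_series_plus_R _ _ _ _
          (is_series_scal_R (c ^ 2 / B ^ 2) _ _ (is_series_p_nk_qinv2 q q_01 x Hx m))
          (is_series_scal_R ((- c ^ 2 * (q + q ^ 2) + 2 * e * c) / B ^ 2) _ _
             (is_series_p_nk_qinv q q_01 x Hx m)))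
       (is_series_scal_R ((c ^ 2 * q ^ 3 - 2 * e * c * q + e ^ 2) / B ^ 2) _ _
          (is_series_p_nk q q_01 x Hx m)))].
  - intro k. unfold stancu_var. fold N B c e. field.
    split; [apply pow_nonzero|]; unfold B; lra.
  - unfold delta_n. fold N B. rewrite (qint_S q q_01). fold N. unfold e, c, B.
    field. repeat split; lra.
Qed.

End Szasz.

Lemma delta_n_pos (alpha beta q x : R) (m : nat) : 0 < q < 1 -> 0 <= x -> 0 <= beta ->
  0 < delta_n alpha beta q (S m) x.
Proof.
  intros Hq Hx Hb.
  assert (HB : 0 < qint q (S m) + beta) by (pose proof (qint_ge_1 q Hq m); lra).
  assert (HV : forall k, 0 < stancu_var q (qint q (S m)) alpha beta x (/ q ^ k)).
  { intro k. apply stancu_var_pos; [exact Hq|exact HB|].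
    rewrite <- Rinv_1. apply Rinv_le_contravar; [apply pow_lt; lra|apply pow_le_1; lra]. }
  assert (Hnn : forall k, 0 <= p_nk q (S m) k x * stancu_var q (qint q (S m)) alpha beta x (/ q ^ k)).
  { intro k. apply Rmult_le_pos; [apply (p_nk_nonneg q Hq x Hx)|left; apply HV]. }
  eapply Rlt_le_trans;
    [|exact (is_series_head_le _ _ Hnn (is_series_delta_n q Hq alpha beta x m Hx Hb))].
  apply Rmult_lt_0_compat; [apply (p_nk_0_pos q Hq x Hx)|apply HV].
Qed.

(** * The modulus of continuity *)

Section ModulusOfContinuity.

Variables (f : R -> R) (M : R).
Hypothesis f_bounded : forall t, 0 <= t -> Rabs (f t) <= M.

Lemma omega_is_lub (d : R) : 0 <= d ->
  is_lub (fun v => exists t x, 0 <= t /\ 0 <= x /\ Rabs (t - x) <= d /\ v = Rabs (f t - f x))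
         (omega f d).
Proof.
  intro Hd. unfold omega. apply epsilon_spec.
  destruct (completeness (fun v => exists t x, 0 <= t /\ 0 <= x /\ Rabs (t - x) <= d /\
                                               v = Rabs (f t - f x))) as [l Hl];
    [|exists (Rabs (f 0 - f 0)), 0, 0; rewrite Rminus_0_r, Rabs_R0; repeat split; lra|].
  - exists (2 * M). intros v [t [x [Ht [Hx [_ ->]]]]].
    pose proof (f_bounded t Ht). pose proof (f_bounded x Hx).
    eapply Rle_trans; [apply Rabs_triang|]. rewrite Rabs_Ropp. lra.
  - exists l. exact Hl.
Qed.

Lemma omega_ge (d t x : R) : 0 <= t -> 0 <= x -> Rabs (t - x) <= d ->
  Rabs (f t - f x) <= omega f d.
Proof.
  intros Ht Hx Htx. pose proof (Rabs_pos (t - x)).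
  apply (omega_is_lub d ltac:(lra)). exists t, x. auto.
Qed.

Lemma omega_nonneg (d : R) : 0 <= d -> 0 <= omega f d.
Proof.
  intro Hd. eapply Rle_trans; [apply Rabs_pos|].
  apply (omega_ge d 0 0); [lra|lra|]. rewrite Rminus_0_r, Rabs_R0. exact Hd.
Qed.

(** Walk from [x] to [t] in steps of length [d], staying in [0, oo). *)
Lemma omega_ge_nat_mul (d : R) (m : nat) (t x : R) : 0 < d -> 0 <= t -> 0 <= x ->
  Rabs (t - x) <= INR (S m) * d -> Rabs (f t - f x) <= INR (S m) * omega f d.
Proof.
  intros Hd. revert t x. induction m; intros t x Ht Hx Htx.
  - simpl in *. rewrite Rmult_1_l in *. apply omega_ge; auto.
  - pose proof (omega_nonneg d ltac:(lra)) as Hw. pose proof (pos_INR (S m)).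
    rewrite (S_INR (S m)) in Htx |- *.
    destruct (Rle_dec (Rabs (t - x)) d) as [Hle|Hgt].
    { pose proof (omega_ge d t x Ht Hx Hle). nra. }
    set (y := if Rle_dec x t then x + d else x - d).
    assert (Hy : 0 <= y /\ Rabs (t - y) <= INR (S m) * d /\ Rabs (y - x) <= d).
    { unfold y. destruct (Rle_dec x t).
      - rewrite Rabs_pos_eq in Hgt, Htx by lra.
        rewrite !Rabs_pos_eq; lra.
      - rewrite Rabs_left in Hgt, Htx by lra.
        rewrite Rabs_left, Rabs_left1; lra. }
    destruct Hy as (Hy0 & Hty & Hyx).
    replace (f t - f x) with ((f t - f y) + (f y - f x)) by ring.
    eapply Rle_trans; [apply Rabs_triang|].
    pose proof (IHm t y Ht Hy0 Hty). pose proof (omega_ge d y x Hy0 Hx Hyx). lra.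
Qed.

Lemma omega_quadratic_bound (d t x : R) : 0 < d -> 0 <= t -> 0 <= x ->
  Rabs (f t - f x) <= omega f d * (1 + (t - x) ^ 2 / d ^ 2).
Proof.
  intros Hd Ht Hx.
  pose proof (omega_nonneg d ltac:(lra)) as Hw.
  set (l := Rabs (t - x) / d).
  assert (Hl2 : (t - x) ^ 2 / d ^ 2 = l * l).
  { unfold l. rewrite <- (pow2_abs (t - x)). field. lra. }
  assert (Hl0 : 0 <= l) by (apply Rdiv_le_0_compat; [apply Rabs_pos|lra]).
  rewrite Hl2.
  destruct (Rle_dec (Rabs (t - x)) d) as [Hle|Hgt].
  { pose proof (omega_ge d t x Ht Hx Hle). nra. }
  assert (Hl1 : 1 < l).
  { unfold l. apply (Rmult_lt_reg_r d); [lra|]. unfold Rdiv.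
    rewrite Rmult_assoc, Rinv_l by lra. lra. }
  destruct (archimed l) as [A1 A2].
  assert (Hk : INR (Z.to_nat (up l)) = IZR (up l))
    by (rewrite INR_IZR_INZ, Z2Nat.id; [reflexivity|apply le_IZR; lra]).
  destruct (Z.to_nat (up l)) as [|m] eqn:Em; [simpl in Hk; lra|].
  assert (Htx : Rabs (t - x) <= INR (S m) * d).
  { rewrite Hk. replace (Rabs (t - x)) with (l * d) by (unfold l; field; lra). nra. }
  pose proof (omega_ge_nat_mul d m t x Hd Ht Hx Htx).
  assert (INR (S m) <= 1 + l * l) by nra. nra.
Qed.

End ModulusOfContinuity.

Definition szasz_average (q N alpha beta : R) (f : R -> R) (k : nat) : R :=
  Series (fun j => szasz_weight q k j * f (stancu_point q N alpha beta k j)).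

Lemma BSS_double_average (alpha beta q : R) (m : nat) (f : R -> R) (x : R) : 0 < q < 1 ->
  let N := qint q (S m) in
  (forall k, ex_series (fun j => szasz_weight q k j * f (stancu_point q N alpha beta k j))) ->
  ex_series (fun k => p_nk q (S m) k x * szasz_average q N alpha beta f k) ->
  BSS alpha beta f q (S m) x = Series (fun k => p_nk q (S m) k x * szasz_average q N alpha beta f k).
Proof.
  intros Hq N Hin Hout. set (A := q / (1 - q ^ S m)).
  assert (Hqn : q ^ S m < 1) by (apply pow_lt_1_compat; [lra|lia]).
  assert (HNA : N * A = q / (1 - q)) by (unfold N, A, qint; field; lra).
  assert (Hjack : forall k,
    jackson q A (fun t => / q ^ (k + 1) * s_nk q (S m) k t *
                          f ((N * t / q ^ k + alpha) / (N + beta)))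
    = (1 - q) * A * (szasz_average q N alpha beta f k / q)).
  { intro k. unfold jackson. f_equal. apply Series_of_is_series.
    eapply is_series_ext_val;
      [|unfold Rdiv; apply Rmult_comm|exact (is_series_scal_R (/ q) _ _ (Series_correct _ (Hin k)))].
    intro j. cbv beta.
    assert (Hnode : N * (A * q ^ j) = jnode q j) by (rewrite <- Rmult_assoc, HNA; unfold jnode; simpl; field; lra).
    unfold s_nk. fold N. rewrite Hnode.
    replace (jnode q j ^ k) with ((q / (1 - q)) ^ k * (q ^ j) ^ k)
      by (unfold jnode; rewrite <- Rpow_mult_distr; f_equal; simpl; field; lra).
    change (Eq q (- jnode q j)) with (Eq_node q (S j)).
    change ((jnode q j / q ^ k + alpha) / (N + beta)) with (stancu_point q N alpha beta k j).
    unfold szasz_weight. pose proof (qfact_pos q Hq k). assert (0 < q ^ k) by (apply pow_lt; lra).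
    rewrite Nat.add_1_r. simpl pow. field. lra. }
  unfold BSS. fold N.
  set (Sp := Series (fun k => p_nk q (S m) k x * szasz_average q N alpha beta f k)).
  rewrite (Series_of_is_series _ ((1 - q) * A / q * Sp)).
  - replace (N * ((1 - q) * A / q * Sp)) with (N * A * (1 - q) / q * Sp) by (field; lra).
    rewrite HNA. field. lra.
  - eapply is_series_ext_val; [|reflexivity|exact (is_series_scal_R _ _ _ (Series_correct _ Hout))].
    intro k. cbv beta. fold A. rewrite Hjack. field. lra.
Qed.

Lemma is_series_mul_affine (a b : nat -> R) (B c s : R) :
  is_series a 1 -> is_series (fun j => a j * b j) B ->
  is_series (fun j => a j * (c * (1 + b j / s))) (c * (1 + B / s)).
Proof.
  intros Ha Hb.
  eapply is_series_ext_val;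
    [| |exact (is_series_scal_R c _ _ (is_series_plus_R _ _ _ _ Ha (is_series_scal_R (/ s) _ _ Hb)))].
  - intro j. unfold Rdiv. ring.
  - unfold Rdiv. ring.
Qed.

Lemma stancu_point_nonneg (q N alpha beta : R) (k j : nat) : 0 < q < 1 -> 0 <= alpha ->
  0 < N + beta -> 0 <= stancu_point q N alpha beta k j.
Proof.
  intros Hq Ha HB. unfold stancu_point, jnode.
  apply Rdiv_le_0_compat; [|exact HB].
  assert (0 < q ^ S j / (1 - q) / q ^ k)
    by (repeat apply Rdiv_lt_0_compat; try apply pow_lt; lra).
  lra.
Qed.

Lemma BSS_omega_estimate (alpha beta q : R) (m : nat) (f : R -> R) (M x : R) :
  0 <= alpha -> alpha <= beta -> 0 < q < 1 -> (forall t, 0 <= t -> Rabs (f t) <= M) -> 0 <= x ->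
  Rabs (BSS alpha beta f q (S m) x - f x) <= 2 * omega f (sqrt (delta_n alpha beta q (S m) x)).
Proof.
  intros Ha Hab Hq HM Hx.
  set (N := qint q (S m)). set (D := delta_n alpha beta q (S m) x).
  set (V := fun k => stancu_var q N alpha beta x (/ q ^ k)).
  assert (HB : 0 < N + beta) by (pose proof (qint_ge_1 q Hq m); unfold N; lra).
  assert (HD : 0 < D) by (apply delta_n_pos; lra).
  set (d := sqrt D). assert (Hd : 0 < d) by (apply sqrt_lt_R0, HD).
  set (w := omega f d).
  assert (Hinner : forall k,
    ex_series (fun j => szasz_weight q k j * f (stancu_point q N alpha beta k j)) /\
    Rabs (szasz_average q N alpha beta f k - f x) <= w * (1 + V k / d ^ 2)).
  { intro k. apply average_deviation with
      (h := fun j => w * (1 + (stancu_point q N alpha beta k j - x) ^ 2 / d ^ 2)).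
    - apply szasz_weight_nonneg, Hq.
    - apply is_series_szasz_weight, Hq.
    - intro j. apply (omega_quadratic_bound f M HM); [exact Hd|apply stancu_point_nonneg; auto|exact Hx].
    - apply is_series_mul_affine; [apply is_series_szasz_weight, Hq|apply is_series_stancu_var; auto]. }
  destruct (average_deviation (fun k => p_nk q (S m) k x) (szasz_average q N alpha beta f)
              (fun k => w * (1 + V k / d ^ 2)) (f x) (w * (1 + D / d ^ 2))) as [Hex Hbound].
  - intro k. apply p_nk_nonneg; assumption.
  - apply is_series_p_nk; assumption.
  - intro k. apply Hinner.
  - apply is_series_mul_affine; [apply is_series_p_nk; assumption|].
    apply is_series_delta_n; lra.
  - rewrite (BSS_double_average alpha beta q m f x Hq (fun k => proj1 (Hinner k)) Hex).
    replace (2 * w) with (w * (1 + D / d ^ 2)); [exact Hbound|].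
    unfold d, w. rewrite pow2_sqrt by lra. field. lra.
Qed.

Theorem mainTheorem3 (alpha beta a : R) (q : nat -> R) :
  0 <= alpha -> alpha <= beta ->
  (forall n, (1 <= n)%nat -> 0 < q n < 1) ->
  st_lim q 1 ->
  st_lim (fun n => q n ^ n) a -> a < 1 ->
  st_lim (fun n => / qint (q n) n) 0 ->
  forall f : R -> R,
    (forall s t, 0 <= s -> s <= t -> f s <= f t) ->
    (exists M, forall t, 0 <= t -> Rabs (f t) <= M) ->
    (forall x, 0 <= x -> forall eps, eps > 0 -> exists d, d > 0 /\
        forall y, 0 <= y -> Rabs (y - x) < d -> Rabs (f y - f x) < eps) ->
  forall x, 0 <= x -> forall n, (1 <= n)%nat ->
    Rabs (BSS alpha beta f (q n) n x - f x)
      <= 2 * omega f (sqrt (delta_n alpha beta (q n) n x)).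
Proof.
  intros Ha Hab Hq _ _ _ _ f _ [M HM] _ x Hx [|m] Hn; [lia|].
  exact (BSS_omega_estimate alpha beta (q (S m)) m f M x Ha Hab (Hq _ Hn) HM Hx).
Qed.
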